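(* Let $\alpha\ne0$ be a nonzero square in $\mathbb{F}_p$ and let $\omega$ be the integer with $1\le\omega\le\frac{p-1}{2}$ and $\omega^2\equiv\alpha\pmod p$. Then in the block $A_\alpha$ of $\mathcal{U}_0(\mathfrak{sl}_2)$ we have $e^{p-\omega}(c-\alpha)=0$ (i.e. $\pi_\alpha e^{p-\omega}(c-\alpha)=0$).
   Context: Let $k$ be an algebraically closed field of characteristic $p>2$, $\mathfrak{sl}_2=\mathfrak{sl}_2(k)$ with standard basis $e,f,h$, and $\mathcal{U}_0(\mathfrak{sl}_2)=\mathcal{U}(\mathfrak{sl}_2)/\langle e^p,f^p,h^p-h\rangle$. $c=(h-1)^2+4ef$ is central. $\mathcal{U}_0(\mathfrak{sl}_2)=\bigoplus_\alpha A_\alpha$ is the block decomposition, $A_\alpha=\pi_\alpha\mathcal{U}_0(\mathfrak{sl}_2)$ with central idempotents $\pi_\alpha$, where $\alpha\in\mathbb{F}_p$ is the scalar by which $c$ acts on the simple modules of the block. *)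

From HB Require Import structures.
From mathcomp Require Import all_boot all_order all_algebra.
Set Implicit Arguments. Unset Strict Implicit. Unset Printing Implicit Defensive.
Import GRing.Theory.
Local Open Scope ring_scope.

Definition sl2_restricted_rels (k : fieldType) (A : algType k) (p : nat)
    (e f h : A) : Prop :=
  [/\ e * f - f * e = h,
      h * e - e * h = e *+ 2 &
      h * f - f * h = - (f *+ 2)] /\
  [/\ e ^+ p = 0, f ^+ p = 0 & h ^+ p = h].

Definition generated_by3 (k : fieldType) (A : algType k) (e f h : A) : Prop :=
  forall S : A -> Prop,
    S e -> S f -> S h -> S 1 ->
    (forall x y, S x -> S y -> S (x + y)) ->
    (forall x y, S x -> S y -> S (x * y)) ->
    (forall (a : k) x, S x -> S (a *: x)) ->
    forall x, S x.

(* A is a k-algebra generated by e, f, h satisfying the relations of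
   U_0(sl_2); i.e. A is a quotient of U_0(sl_2) (U_0(sl_2) itself included). *)
Definition is_U0sl2 (k : fieldType) (A : algType k) (p : nat) (e f h : A) : Prop :=
  sl2_restricted_rels p e f h /\ generated_by3 e f h.

Definition casimir (k : fieldType) (A : algType k) (e f h : A) : A :=
  (h - 1) ^+ 2 + 4%:R * (e * f).

(* pi is the component of 1 in the generalized (alpha)-eigenspace of
   (multiplication by) the central element c, along the complementary
   Fitting component:  pi \in ker (c - alpha)^n  for some n,  and
   1 - pi \in im (c - alpha)^m  for every m.  This is the central block
   idempotent pi_alpha of the block on whose simple modules c acts by alpha. *)
Definition block_idempotent (k : fieldType) (A : algType k) (c : A) (alpha : k)
    (pi : A) : Prop :=
  (exists n : nat, (c - alpha%:A) ^+ n * pi = 0) /\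
  (forall m : nat, exists z : A, 1 - pi = (c - alpha%:A) ^+ m * z).

From HB Require Import structures.
From mathcomp Require Import all_boot all_order all_algebra.
From mathcomp Require Import zify.
Import GRing.Theory.

Set Implicit Arguments.
Unset Strict Implicit.
Unset Printing Implicit Defensive.

(* Let T_w = prod_{i in F_p, i <> w} (X - i^2) = (X - w^2) Q_w ([annihilator w] and
   [cofactor w] below), so that Q_w(w^2) <> 0.
   Since 4^w f^w e^w = prod_{j < w} (c - (h + 2j + 1)^2) and e^p = 0, this product
   kills e^(p-w).  As h^p = h, e^(p-w) splits along the eigenvalues mu of h by the
   Lagrange polynomials of F_p; on the mu-component the product acts as the polynomial
   prod_j (c - (mu + 2j + 1)^2), and since the residues mu + 2j + 1 are distinct and
   contain at most one of w and -w, it divides T_w.  Hence T_w(c) e^(p-w) = 0, i.e.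
   Q_w(c) kills e^(p-w) (c - alpha); so does (c - alpha)^n after multiplying by pi,
   and Q_w is coprime to (X - alpha)^n. *)

Lemma dvdn_lt_double p n : n < p.*2 -> p %| n -> n = 0 \/ n = p.
Proof. by move=> lt2p /dvdnP[[|[|q]] En]; lia. Qed.

Lemma uniq_progression_mod p a w :
  w.*2 <= p -> uniq [seq (a + j.*2) %% p | j <- iota 0 w].
Proof.
move=> hw; rewrite map_inj_in_uniq ?iota_uniq // => j j'.
rewrite !mem_iota !add0n /= => hj hj'.
wlog le_jj' : j j' hj hj' / j <= j'.
  by move=> W; case: (leqP j j') => [|/ltnW] h E; [apply: W | apply/esym/W].
move/eqP; rewrite eq_sym eqn_mod_dvd; last by lia.
have -> : a + j'.*2 - (a + j.*2) = (j' - j).*2 by lia.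
have lt2p : (j' - j).*2 < p.*2 by lia.
by case/(dvdn_lt_double lt2p); lia.
Qed.

Lemma progression_mod_avoids_opp p a w j j' : odd p -> w.*2 < p ->
  j < w -> j' < w -> (a + j.*2) %% p = w -> (a + j'.*2) %% p != p - w.
Proof.
move=> odd_p hw hj hj' Ej; apply/eqP => Ej'.
have dX : p %| a + j'.*2 + w by rewrite /dvdn -modnDml Ej' subnK ?modnn //; lia.
have dY : p %| a + j.*2 + (p - w) by rewrite /dvdn -modnDml Ej subnKC ?modnn //; lia.
have : p %| a + j.*2 + (p - w) + (j' + w - j).*2.
  have -> : a + j.*2 + (p - w) + (j' + w - j).*2 = a + j'.*2 + w + p by lia.
  by rewrite dvdn_add ?dvdnn.
have lt2p : (j' + w - j).*2 < p.*2 by lia.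
rewrite dvdn_addr // => /(dvdn_lt_double lt2p) [|E]; first by lia.
by move: odd_p; rewrite -E odd_double.
Qed.

Local Open Scope ring_scope.

Lemma prod_sub_uniq {R : comPzRingType} {I : eqType} (s r : seq I) (F : I -> R) :
  uniq s -> uniq r -> {subset r <= s} ->
  \prod_(i <- s) F i = \prod_(i <- s | i \notin r) F i * \prod_(i <- r) F i.
Proof.
move=> us ur rs; rewrite (bigID (mem r)) /= mulrC; congr (_ * _).
rewrite -big_filter; apply/perm_big/uniq_perm; rewrite ?filter_uniq // => i.
by rewrite mem_filter andb_idr //; apply: rs.
Qed.

Lemma deriv_prod_XsubC {R : comNzRingType} {I : eqType} (s : seq I) (a : I -> R) :
  uniq s -> (\prod_(i <- s) ('X - (a i)%:P))^`() =
            \sum_(j <- s) \prod_(i <- s | i != j) ('X - (a i)%:P).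
Proof.
elim: s => [|x s IH] /=; first by rewrite !big_nil -polyC1 derivC.
case/andP => xNs us; rewrite !big_cons derivM derivXsubC mul1r IH // eqxx /=.
congr (_ + _).
  rewrite big_seq_cond [RHS]big_seq_cond; apply: eq_bigl => i.
  by case: eqVneq => [->|_]; rewrite ?(negPf xNs) ?andbT.
rewrite big_distrr big_seq [RHS]big_seq; apply: eq_bigr => j js.
by rewrite big_cons ifT //; apply: contraNneq xNs => ->.
Qed.

Section PrimeCharacteristic.
Context {k : fieldType} (p : nat).
Hypothesis hchar : p \in [pchar k].

Lemma eqr_nat_pchar i j : (i%:R == j%:R :> k) = (i == j %[mod p]).
Proof.
wlog le_ij : i j / (i <= j)%N.
  move=> W; case: (leqP i j) => [|/ltnW] h; first exact: W.
  by rewrite eq_sym W // eq_sym.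
by rewrite [RHS]eq_sym eqn_mod_dvd // (dvdn_pcharf hchar) natrB // subr_eq0.
Qed.

Lemma eqr_nat_lt_pchar i j : (i < p)%N -> (j < p)%N -> (i%:R == j%:R :> k) = (i == j).
Proof. by move=> hi hj; rewrite eqr_nat_pchar !modn_small. Qed.

(* Up to sign, the Lagrange interpolation basis of F_p: by Wilson's theorem
   [lagrange mu] takes the value -1 at mu. *)
Definition lagrange (mu : nat) : {poly k} :=
  \prod_(i <- iota 0 p | i != mu) ('X - i%:R%:P).

Lemma prod_XsubC_iota_pchar : \prod_(i <- iota 0 p) ('X - i%:R%:P) = 'X^p - 'X :> {poly k}.
Proof.
have p_gt1 := prime_gt1 (pcharf_prime hchar).
have size_XpX : size ('X^p - 'X : {poly k}) = p.+1.
  by rewrite size_polyDl ?size_polyXn // size_polyN size_polyX.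
pose rs := [seq i%:R : k | i <- iota 0 p].
have roots_rs : all (root ('X^p - 'X)) rs.
  apply/allP => _ /mapP[i _ ->]; rewrite rootE !hornerE.
  by rewrite -(pFrobenius_autE hchar) (pFrobenius_aut_nat hchar) subrr.
have uniq_rs : uniq_roots rs.
  rewrite uniq_rootsE map_inj_in_uniq ?iota_uniq // => i j.
  rewrite !mem_iota !add0n => /andP[_ hi] /andP[_ hj] /eqP.
  by rewrite eqr_nat_lt_pchar // => /eqP.
rewrite [RHS](all_roots_prod_XsubC _ roots_rs uniq_rs); last by rewrite size_map size_iota.
by rewrite lead_coefDl ?lead_coefXn ?scale1r ?big_map // size_polyXn size_polyN size_polyX.
Qed.

Lemma XsubC_mul_lagrange mu : (mu < p)%N -> ('X - mu%:R%:P) * lagrange mu = 'X^p - 'X.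
Proof.
move=> hmu; rewrite -prod_XsubC_iota_pchar /lagrange (bigD1_seq mu) ?iota_uniq //.
by rewrite mem_iota.
Qed.

Lemma sum_lagrange : \sum_(mu <- iota 0 p) lagrange mu = -1.
Proof.
have hcharX : p \in [pchar {poly k}] by rewrite pchar_poly.
rewrite -deriv_prod_XsubC ?iota_uniq // prod_XsubC_iota_pchar derivB derivXn derivX.
by rewrite (mulrn_pchar hcharX) sub0r.
Qed.

Definition XsubSqr (i : nat) : {poly k} := 'X - (i%:R ^+ 2)%:P.

Definition annihilator (w : nat) := \prod_(i <- iota 0 p | i != w) XsubSqr i.

Definition cofactor (w : nat) :=
  \prod_(i <- iota 0 p | (i != w) && (i != p - w)%N) XsubSqr i.

Lemma XsubSqr_subn w : (w <= p)%N -> XsubSqr (p - w) = XsubSqr w.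
Proof. by move=> hw; rewrite /XsubSqr natrB // (pcharf0 hchar) sub0r sqrrN. Qed.

Lemma annihilatorE w x : (0 < w)%N -> (w.*2 < p)%N -> (x == w) || (x == p - w)%N ->
  \prod_(i <- iota 0 p | i != x) XsubSqr i = XsubSqr w * cofactor w.
Proof.
have split_off y z : y != z -> (y < p)%N -> \prod_(i <- iota 0 p | i != z) XsubSqr i =
    XsubSqr y * \prod_(i <- iota 0 p | (i != z) && (i != y)) XsubSqr i.
  move=> yz yp; rewrite -big_filter (bigD1_seq y) ?filter_uniq ?iota_uniq //.
    by rewrite big_filter_cond.
  by rewrite mem_filter mem_iota yz.
move=> w0 hw /orP[] /eqP ->.
  by rewrite (split_off (p - w)%N) ?XsubSqr_subn //; try apply/eqP; lia.
rewrite (split_off w); last 2 first; [apply/eqP; lia | lia |].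
by congr (_ * _); apply: eq_bigl => i; rewrite andbC.
Qed.

Lemma annihilator_factor w : (0 < w)%N -> (w.*2 < p)%N ->
  annihilator w = XsubSqr w * cofactor w.
Proof. by move=> w0 hw; rewrite /annihilator (annihilatorE w0 hw) ?eqxx. Qed.

Lemma cofactor_root w : (0 < w)%N -> (w.*2 < p)%N -> ~~ root (cofactor w) (w%:R ^+ 2).
Proof.
move=> w0 hw; rewrite /root horner_prod prodf_seq_neq0; apply/allP => i.
rewrite mem_iota => /andP[_ hi]; apply/implyP => /andP[iw ipw].
rewrite /XsubSqr hornerXsubC subr_sqr mulf_neq0 //.
  by rewrite subr_eq0 eqr_nat_lt_pchar //; lia.
have lt2p : (w + i < p.*2)%N by lia.
by rewrite -natrD -(dvdn_pcharf hchar); apply/negP => /(dvdn_lt_double lt2p)[]; lia.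
Qed.

Lemma dvd_annihilator w a : (0 < w)%N -> (w.*2 < p)%N ->
  \prod_(j <- iota 0 w) XsubSqr (a + j.*2) %| annihilator w.
Proof.
move=> w0 hw; have p_prime := pcharf_prime hchar.
have odd_p : odd p by apply/negPn/negP => /(prime_oddPn p_prime) p2; lia.
pose R := [seq (a + j.*2) %% p | j <- iota 0 w]%N.
have -> : \prod_(j <- iota 0 w) XsubSqr (a + j.*2) = \prod_(r <- R) XsubSqr r.
  by rewrite big_map; apply: eq_bigr => j _; rewrite /XsubSqr (GRing.natr_mod_pchar hchar).
pose x := if w \in R then (p - w)%N else w.
have -> : annihilator w = \prod_(i <- iota 0 p | i != x) XsubSqr i.
  by rewrite annihilator_factor // (annihilatorE w0 hw) // /x; case: ifP; rewrite eqxx ?orbT.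
have uR : uniq R by apply: uniq_progression_mod; lia.
rewrite -[X in _ %| X]big_filter (prod_sub_uniq _ (filter_uniq _ (iota_uniq _ _)) uR) ?dvdp_mull //.
move=> _ /mapP[j hj ->]; rewrite mem_iota add0n in hj.
rewrite mem_filter mem_iota leq0n add0n ltn_pmod ?prime_gt0 // !andbT.
rewrite /x; case: ifP => [/mapP[j0 hj0 Ej0]|wR].
  rewrite mem_iota add0n in hj0.
  exact: (progression_mod_avoids_opp odd_p hw hj0 hj (esym Ej0)).
by apply: contraFneq wR => <-; apply: map_f; rewrite mem_iota.
Qed.

End PrimeCharacteristic.

Section Intertwining.
Variable R : pzRingType.
Implicit Types x y z s : R.

Lemma intertwineXl x y z n : x * y = y * z -> x ^+ n * y = y * z ^+ n.
Proof.
move=> xy; elim: n => [|n IH]; first by rewrite !expr0 mul1r mulr1.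
by rewrite exprSr -mulrA xy mulrA IH -mulrA -exprSr.
Qed.

Lemma intertwine_shiftXr x y s m :
  GRing.comm s y -> x * y = y * (x + s) -> x * y ^+ m = y ^+ m * (x + s *+ m).
Proof.
move=> sy xy; elim: m => [|m IH]; first by rewrite !expr0 mul1r mulr1 mulr0n addr0.
rewrite exprSr mulrA IH -mulrA mulrDl xy -(commrMn m (commr_sym sy)) -mulrDr mulrA -exprSr.
by rewrite mulrSr addrA addrAC.
Qed.

End Intertwining.

Section AlgebraElements.
Context {k : fieldType} {A : algType k}.
Implicit Types (x z V : A) (q r : {poly k}).

Definition central z := forall x, GRing.comm z x.

Lemma comm_horner x z q : GRing.comm x z -> GRing.comm x (horner_alg z q).
Proof.
move=> xz; elim/poly_ind: q => [|q a IH]; first by rewrite rmorph0; apply: commr0.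
rewrite rmorphD rmorphM /= horner_algX horner_algC.
by apply: commrD; [exact: commrM | apply/commr_sym/comm_alg].
Qed.

Lemma central_horner z q : central z -> central (horner_alg z q).
Proof. by move=> cz x; apply/commr_sym/comm_horner/commr_sym. Qed.

Lemma horner_coprime_annihilator z x q r : coprimep q r ->
  horner_alg z q * x = 0 -> horner_alg z r * x = 0 -> x = 0.
Proof.
case/Bezout_eq1_coprimepP => [[u v] /= Huv] qx rx.
have := congr1 (horner_alg z) Huv; rewrite rmorphD !rmorphM rmorph1 => E.
by rewrite -[x]mul1r -E mulrDl -!mulrA qx rx !mulr0 addr0.
Qed.

Lemma horner_lagrange_eigen p x mu : p \in [pchar k] -> x ^+ p = x -> (mu < p)%N ->
  x * horner_alg x (lagrange p mu) = mu%:R *: horner_alg x (lagrange p mu).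
Proof.
move=> hchar xp hmu; apply/eqP; rewrite -subr_eq0 -mulr_algl -mulrBl.
have := congr1 (horner_alg x) (XsubC_mul_lagrange hchar hmu).
rewrite rmorphM !rmorphB rmorphXn /= !horner_algX horner_algC xp subrr.
by move/eqP.
Qed.

Lemma eigen_prod c h V mu {I : Type} (s : seq I) (a : I -> k) :
  central c -> h * V = mu *: V ->
  (\prod_(i <- s) (c - (h + (a i)%:A) ^+ 2)) * V =
  horner_alg c (\prod_(i <- s) ('X - ((mu + a i) ^+ 2)%:P)) * V.
Proof.
move=> cc hV; elim: s => [|i s IH]; first by rewrite !big_nil rmorph1.
rewrite !big_cons rmorphM -!mulrA IH.
set W := _ * V; have hW : h * W = mu *: W.
  by rewrite /W mulrA -(central_horner _ cc) -mulrA hV -scalerAr.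
have haW : (h + (a i)%:A) * W = (mu + a i) *: W by rewrite mulrDl hW mulr_algl scalerDl.
rewrite rmorphB /= horner_algX horner_algC !mulrBl expr2 -mulrA haW -scalerAr haW.
by rewrite scalerA -expr2 mulr_algl.
Qed.

End AlgebraElements.

Section CasimirCommutation.
Context {k : fieldType} {A : algType k} (e f h : A).
Hypotheses (hef : e * f - f * e = h) (hhe : h * e - e * h = e *+ 2).

Lemma casimirE_fe : casimir e f h = (h + 1) ^+ 2 + 4%:R * (f * e).
Proof.
rewrite /casimir (_ : e * f = f * e + h); last by rewrite -hef addrC subrK.
rewrite mulrDr [_ + 4%:R * h]addrC addrA; congr (_ + _).
rewrite sqrrD1 sqrrB1 mulr_natl addrAC; congr (_ + 1).
by rewrite -[4%N]/(2 + 2)%N mulrnDr addrA subrK.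
Qed.

Lemma comm_casimir_e : GRing.comm (casimir e f h) e.
Proof.
have he : (h - 1) * e = e * (h + 1).
  rewrite mulrBl mul1r (_ : h * e = e * h + e *+ 2); last by rewrite -hhe addrC subrK.
  by rewrite mulrDr mulr1 mulr2n addrA addrK.
rewrite /GRing.comm {2}casimirE_fe /casimir mulrDl mulrDr (intertwineXl 2 he).
by congr (_ + _); rewrite -!mulrA [RHS]mulrA (commr_nat e 4) -mulrA.
Qed.

Lemma casimir_fe_exp n : 4%:R ^+ n * (f ^+ n * e ^+ n) =
  \prod_(j <- iota 0 n) (casimir e f h - (h + (j.*2.+1)%:R) ^+ 2).
Proof.
have fe4 : 4%:R * (f * e) = casimir e f h - (h + 1) ^+ 2.
  by rewrite casimirE_fe [(h + 1) ^+ 2 + _]addrC addrK.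
have h1e : (h + 1) * e = e * (h + 1 + 2%:R).
  rewrite mulrDl mul1r (_ : h * e = e * h + e *+ 2); last by rewrite -hhe addrC subrK.
  by rewrite mulrDr mulr_natr mulrDr mulr1 addrAC.
have shift_en m : (casimir e f h - (h + 1) ^+ 2) * e ^+ m =
    e ^+ m * (casimir e f h - (h + (m.*2.+1)%:R) ^+ 2).
  rewrite mulrBl mulrBr (commrX m comm_casimir_e); congr (_ - _).
  rewrite (intertwineXl 2 (intertwine_shiftXr m (commr_sym (commr_nat e 2)) h1e)).
  by rewrite -mulrnA -addrA -mulrS mul2n.
elim: n => [|n IH]; first by rewrite big_nil !expr0 !mul1r.
rewrite (_ : iota 0 n.+1 = iota 0 n ++ [:: n]); last by rewrite -addn1 iotaD.
rewrite big_cat big_seq1 -IH exprSr [f ^+ n.+1]exprSr exprS /= -!mulrA -shift_en -fe4.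
congr (_ * _); rewrite mulrA -(commr_nat (f ^+ n) 4) -mulrA; congr (_ * _).
by rewrite !mulrA.
Qed.

End CasimirCommutation.

Lemma casimir_swap {k : fieldType} {A : algType k} (e f h : A) :
  e * f - f * e = h -> casimir f e (- h) = casimir e f h.
Proof. by move=> hef; rewrite (casimirE_fe hef) /casimir -opprD sqrrN. Qed.

Lemma casimir_central {k : fieldType} {A : algType k} p (e f h : A) :
  is_U0sl2 p e f h -> central (casimir e f h).
Proof.
move=> [[[hef hhe hhf] _] gen].
have ce := comm_casimir_e hef hhe.
have cf : GRing.comm (casimir e f h) f.
  rewrite -(casimir_swap hef); apply: comm_casimir_e; first by rewrite -hef opprB.
  by rewrite mulNr mulrN opprK addrC -opprB hhf opprK.
have ch : GRing.comm (casimir e f h) h.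
  apply/commr_sym; apply: commrD; first by apply/commrX/commrB; [apply: commr_refl | apply: commr1].
  apply/commrM; first exact: commr_nat.
  have he : h * e = e * (h + 2%:R) by rewrite mulrDr mulr_natr -hhe addrC subrK.
  have hf : (h + 2%:R) * f = f * h.
    by rewrite mulrDl mulr_natl -[h * f](subrK (f * h)) hhf addrAC addNr add0r.
  by rewrite /GRing.comm mulrA he -mulrA hf mulrA.
apply: (gen (GRing.comm (casimir e f h))) => //; first exact: commr1.
- by move=> x y; apply: commrD.
- by move=> x y; apply: commrM.
- by move=> a x cx; rewrite /GRing.comm -scalerAr cx scalerAl.
Qed.

Lemma annihilator_eigen {k : fieldType} {A : algType k} p (c h V : A) w mu :
  p \in [pchar k] -> central c -> (0 < w)%N -> (w.*2 < p)%N -> h * V = mu%:R *: V ->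
  (\prod_(j <- iota 0 w) (c - (h + (j.*2.+1)%:R) ^+ 2)) * V = 0 ->
  horner_alg c (annihilator p w) * V = 0.
Proof.
move=> hchar cc w0 hw hV.
have -> : \prod_(j <- iota 0 w) (c - (h + (j.*2.+1)%:R) ^+ 2) =
    \prod_(j <- iota 0 w) (c - (h + ((j.*2.+1)%:R : k)%:A) ^+ 2).
  by apply: eq_bigr => j _; rewrite -in_algE rmorph_nat.
rewrite (eigen_prod _ _ cc hV) => PV.
have /dvdpP[S ->] := dvd_annihilator hchar mu.+1 w0 hw.
have -> : \prod_(j <- iota 0 w) XsubSqr (mu.+1 + j.*2) =
    \prod_(j <- iota 0 w) ('X - ((mu%:R + (j.*2.+1)%:R) ^+ 2)%:P) :> {poly k}.
  by apply: eq_bigr => j _; rewrite /XsubSqr -natrD addSnnS.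
by rewrite rmorphM -mulrA PV mulr0.
Qed.

Lemma annihilator_e_exp {k : fieldType} {A : algType k} p (e f h : A) w :
  p \in [pchar k] -> is_U0sl2 p e f h -> (0 < w)%N -> (w.*2 < p)%N ->
  horner_alg (casimir e f h) (annihilator p w) * e ^+ (p - w) = 0.
Proof.
move=> hchar hU w0 hw; have cc := casimir_central hU.
case: hU => [[[hef hhe _] [ep _ hp]] _].
set c := casimir e f h; set Y := e ^+ (p - w).
pose P := \prod_(j <- iota 0 w) (c - (h + (j.*2.+1)%:R) ^+ 2).
have PY : P * Y = 0.
  rewrite /P -(casimir_fe_exp hef hhe) -!mulrA -exprD subnKC ?ep ?mulr0 //; lia.
have Ph : GRing.comm P h.
  apply/commr_sym/commr_prod => j _; apply/commrB; first exact/commr_sym/cc.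
  by apply/commrX/commrD; [apply: commr_refl | apply: commr_nat].
have -> : Y = - \sum_(mu <- iota 0 p) horner_alg h (lagrange p mu) * Y.
  by rewrite -mulr_suml -rmorph_sum sum_lagrange // rmorphN rmorph1 mulN1r opprK.
rewrite mulrN mulr_sumr big_seq big1 ?oppr0 // => mu.
rewrite mem_iota add0n => /andP[_ hmu].
apply: (annihilator_eigen (h := h) (mu := mu) hchar cc w0 hw).
  by rewrite mulrA horner_lagrange_eigen // -scalerAl.
by rewrite mulrA (comm_horner _ Ph) -mulrA PY mulr0.
Qed.

Theorem lemma4p9 (k : closedFieldType) (p : nat)
    (hchar : p \in [pchar k]) (hp2 : (2 < p)%N)
    (A : algType k) (e f h : A) (hU : is_U0sl2 p e f h)
    (omega : nat) (homega1 : (1 <= omega)%N) (homega2 : (omega <= (p - 1) %/ 2)%N)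
    (alpha : k) (halpha : alpha = (omega ^ 2)%:R)
    (pi : A) (hpi : block_idempotent (casimir e f h) alpha pi) :
  pi * (e ^+ (p - omega) * (casimir e f h - alpha%:A)) = 0.
Proof.
have hw : (omega.*2 < p)%N by move: homega2; rewrite leq_divRL //; lia.
have [n hn] := hpi.1.
set c := casimir e f h; set Y := e ^+ (p - omega).
have cc : central c := casimir_central hU.
have c_alpha : horner_alg c ('X - alpha%:P) = c - alpha%:A.
  by rewrite rmorphB /= horner_algX horner_algC.
have XsubSqr_omega : XsubSqr omega = 'X - alpha%:P by rewrite halpha natrX.
have TY := annihilator_e_exp hchar hU homega1 hw.
rewrite (annihilator_factor hchar homega1 hw) -/c rmorphM /= in TY.
rewrite XsubSqr_omega c_alpha in TY.
apply: (horner_coprime_annihilator (z := c) (q := cofactor p omega) (r := ('X - alpha%:P) ^+ n)).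
- by rewrite coprimep_expr // coprimep_XsubC halpha natrX cofactor_root.
- have QYD : horner_alg c (cofactor p omega) * (Y * (c - alpha%:A)) = 0.
    by rewrite -c_alpha -(central_horner _ cc Y) mulrA (central_horner _ cc) c_alpha TY.
  by rewrite (mulrA (horner_alg c _)) (central_horner _ cc pi) -mulrA QYD mulr0.
- by rewrite rmorphXn /= c_alpha (mulrA (_ ^+ n)) hn mul0r.
Qed.
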